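(* Let $\Lambda$ be a rank-2 Bratteli diagram with levels $(V_n)$ and path groupoid $G$. There is a unique automorphism $\alpha$ of $\Lambda$ such that $\alpha(e) = \mathcal{F}^{m_n}(e)$ for all $n$ and all $e\in V_n\Lambda^{e_1}$. This $\alpha$ induces a homeomorphism, also denoted $\alpha$, of $\Lambda^\infty$ by $\alpha(x) = \alpha\circ x$, which in turn induces an automorphism $\alpha$ of the topological groupoid $G$ with $\alpha(x,m,y) = (\alpha(x),m,\alpha(y))$.
   Context: A 2-graph is a countable category $\Lambda$ with a functor $d:\Lambda\to\mathbb{N}^2$ satisfying the factorisation property; $\Lambda^m=d^{-1}(m)$, $\Lambda^0$ the vertices; row-finite means each $v\Lambda^m$ is finite. Blue edges: $\Lambda^{e_1}$; red edges: $\Lambda^{e_2}$. A cycle is $\lambda$ with $d(\lambda)\ne0$, $r(\lambda)=s(\lambda)$ and $s(\lambda')\ne s(\lambda)$ whenever $\lambda=\lambda'\lambda''$ with $0<d(\lambda')<d(\lambda)$; it is isolated if whenever $\lambda=\lambda'\lambda''$ with $d(\lambda')\ne0$, $r(\lambda)\Lambda^{d(\lambda')}\setminus\{\lambda'\}$ and $\Lambda^{d(\lambda'')}s(\lambda)\setminus\{\lambda''\}$ are empty. A rank-2 Bratteli diagram is a row-finite 2-graph whose vertex set is a disjoint union of nonempty finite sets $V_n$ ($n\ge0$) with: (1) each blue edge in some $V_n\Lambda^{e_1}V_{n+1}$; (2) the blue graph has no sources and all sinks in $V_0$; (3) every vertex lies on an isolated red cycle and $\Lambda^{e_2}=\bigcup_nV_n\Lambda^{e_2}V_n$.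 For $e\in\Lambda^{e_1}$ let $f$ be the unique element of $\Lambda^{e_2}r(e)$ and $\mathcal{F}(e)$ the unique blue edge with $fe=\mathcal{F}(e)f'$ for a red edge $f'$; $o(e)$ is the least $k>0$ with $\mathcal{F}^k(e)=e$; $O_n=\operatorname{lcm}\{o(e):e\in V_n\Lambda^{e_1}\}$; $m_0=0$, $m_{n+1}=m_n+nO_n$. An automorphism of $\Lambda$ is a degree-preserving bijective functor. $\Omega_2$ is the 2-graph with vertices $\mathbb{N}^2$ and morphisms $(n,n+m)$; $\Lambda^\infty$ is the set of degree-preserving functors $x:\Omega_2\to\Lambda$, $\sigma^p(x)(m,n)=x(m+p,n+p)$, and for $\lambda\in\Lambda$, $Z(\lambda)=\{\lambda z: z\in s(\lambda)\Lambda^\infty\}$ generates the topology. The path groupoid is $G=\{(x,l-m,y)\in\Lambda^\infty\times\mathbb{Z}^2\times\Lambda^\infty : \sigma^l(x)=\sigma^m(y)\}$ with $(x,n,y)(y,k,z)=(x,n+k,z)$, $(x,n,y)^{-1}=(y,-n,x)$, and topology with basic open sets $Z(\lambda,\mu)=\{(\lambda z,d(\lambda)-d(\mu),\mu z): z\in s(\lambda)\Lambda^\infty\}$ for $s(\lambda)=s(\mu)$. *)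

From HB Require Import structures.
From mathcomp Require Import all_boot all_algebra.
From Stdlib Require Import ClassicalEpsilon List.
Set Implicit Arguments. Unset Strict Implicit. Unset Printing Implicit Defensive.

Definition N2 := (nat * nat)%type.
Definition zeroN2 : N2 := (0, 0)%N.
Definition e1 : N2 := (1, 0)%N.
Definition e2 : N2 := (0, 1)%N.
Definition addN2 (a b : N2) : N2 := (a.1 + b.1, a.2 + b.2)%N.
Definition subN2 (a b : N2) : N2 := (a.1 - b.1, a.2 - b.2)%N.
Definition leN2 (a b : N2) : bool := (a.1 <= b.1)%N && (a.2 <= b.2)%N.

Lemma leN2_refl (m : N2) : leN2 m m.
Proof. by rewrite /leN2 !leqnn. Qed.

Lemma leN2_0 (m : N2) : leN2 zeroN2 m.
Proof. by []. Qed.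

Lemma leN2_addr (p : N2) (m n : N2) : leN2 m n -> leN2 (addN2 m p) (addN2 n p).
Proof. by rewrite /leN2 /addN2 /= !leq_add2r. Qed.

(** * 2-graphs: a countable category with a degree functor d : Lambda -> N^2
    satisfying the factorisation property.  [cmp f g] is the composite
    "f g" (first g, then f), meaningful when [src f = rng g]. *)
Record two_graph := TwoGraph {
  Obj : countType;
  Mor : countType;
  rng : Mor -> Obj;
  src : Mor -> Obj;
  idm : Obj -> Mor;
  cmp : Mor -> Mor -> Mor;
  deg : Mor -> N2;
  rng_idm : forall v, rng (idm v) = v;
  src_idm : forall v, src (idm v) = v;
  cmp_idl : forall f, cmp (idm (rng f)) f = f;
  cmp_idr : forall f, cmp f (idm (src f)) = f;
  rng_cmp : forall f g, src f = rng g -> rng (cmp f g) = rng f;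
  src_cmp : forall f g, src f = rng g -> src (cmp f g) = src g;
  cmpA : forall f g h, src f = rng g -> src g = rng h ->
           cmp (cmp f g) h = cmp f (cmp g h);
  deg_idm : forall v, deg (idm v) = zeroN2;
  deg_cmp : forall f g, src f = rng g -> deg (cmp f g) = addN2 (deg f) (deg g);
  factorisation : forall (l : Mor) (m n : N2), deg l = addN2 m n ->
    exists! p : Mor * Mor,
      deg p.1 = m /\ deg p.2 = n /\ src p.1 = rng p.2 /\ l = cmp p.1 p.2
}.

Arguments rng {t}. Arguments src {t}. Arguments idm {t}. Arguments cmp {t}.
Arguments deg {t}.

Section TwoGraphDefs.
Variable L : two_graph.

Definition row_finite : Prop :=
  forall (v : Obj L) (m : N2), exists s : list (Mor L),
    forall l : Mor L, rng l = v -> deg l = m -> l \in s.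

Definition is_blue (e : Mor L) : Prop := deg e = e1.
Definition is_red (f : Mor L) : Prop := deg f = e2.

Definition is_cycle (l : Mor L) : Prop :=
  deg l <> zeroN2 /\ rng l = src l /\
  forall l' l'' : Mor L, src l' = rng l'' -> l = cmp l' l'' ->
    deg l' <> zeroN2 -> deg l' <> deg l -> src l' <> src l.

Definition is_isolated (l : Mor L) : Prop :=
  forall l' l'' : Mor L, src l' = rng l'' -> l = cmp l' l'' -> deg l' <> zeroN2 ->
    (forall m : Mor L, rng m = rng l -> deg m = deg l' -> m = l') /\
    (forall m : Mor L, src m = src l -> deg m = deg l'' -> m = l'').

Definition is_red_path (l : Mor L) : Prop := (deg l).1 = 0%N.

Definition lies_on (v : Obj L) (l : Mor L) : Prop :=
  exists l' l'' : Mor L, src l' = rng l'' /\ l = cmp l' l'' /\ src l' = v.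

(** rank-2 Bratteli diagram with levels given by [level] (V_n = level^-1 n) *)
Definition rank2_bratteli (level : Obj L -> nat) : Prop :=
  row_finite /\
  (forall n, exists v : Obj L, level v = n) /\
  (forall n, exists s : list (Obj L), forall v, level v = n -> v \in s) /\
  (forall e : Mor L, is_blue e -> level (src e) = (level (rng e)).+1) /\
  (forall v : Obj L, exists e : Mor L, is_blue e /\ rng e = v) /\
  (forall v : Obj L, (forall e : Mor L, is_blue e -> src e <> v) -> level v = 0%N) /\
  (forall v : Obj L, exists l : Mor L,
      is_red_path l /\ is_cycle l /\ is_isolated l /\ lies_on v l) /\
  (forall f : Mor L, is_red f -> level (rng f) = level (src f)).

Definition Fmap (e : Mor L) : Mor L :=
  epsilon (inhabits e) (fun g : Mor L =>
    exists f f' : Mor L, is_red f /\ is_red f' /\ src f = rng e /\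
      is_blue g /\ src g = rng f' /\ cmp f e = cmp g f').

Definition orderF (e : Mor L) : nat :=
  epsilon (inhabits 0%N) (fun k : nat =>
    (0 < k)%N /\ iter k Fmap e = e /\
    forall j, (0 < j)%N -> iter j Fmap e = e -> (k <= j)%N).

Definition levelEdges (level : Obj L -> nat) (n : nat) : list (Mor L) :=
  epsilon (inhabits [::]) (fun s : list (Mor L) =>
    uniq s /\ forall e, e \in s <-> (is_blue e /\ level (rng e) = n)).

Definition Olcm (level : Obj L -> nat) (n : nat) : nat :=
  \big[lcmn/1%N]_(e <- levelEdges level n) orderF e.

Fixpoint mseq (level : Obj L -> nat) (n : nat) : nat :=
  match n with
  | 0 => 0
  | n'.+1 => mseq level n' + n' * Olcm level n'
  end.

(** automorphisms: degree-preserving bijective functors Lambda -> Lambda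
    (given by the map on morphisms; the object map is part of functoriality) *)
Definition is_endofunctor (a : Mor L -> Mor L) : Prop :=
  exists ao : Obj L -> Obj L,
    (forall v, a (idm v) = idm (ao v)) /\
    (forall f, rng (a f) = ao (rng f)) /\
    (forall f, src (a f) = ao (src f)) /\
    (forall f g, src f = rng g -> a (cmp f g) = cmp (a f) (a g)).

Definition is_automorphism (a : Mor L -> Mor L) : Prop :=
  is_endofunctor a /\ (forall f, deg (a f) = deg f) /\ bijective a.

(** Omega_2 : morphisms (m, n) with m <= n *)
Definition O2Mor := {p : N2 * N2 | leN2 p.1 p.2}.
Definition om (m n : N2) (h : leN2 m n) : O2Mor :=
  exist (fun p : N2 * N2 => leN2 p.1 p.2) (m, n) h.

Definition ipath := O2Mor -> Mor L.

Definition is_inf_path (x : ipath) : Prop :=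
  exists xo : N2 -> Obj L,
    (forall m, x (om (leN2_refl m)) = idm (xo m)) /\
    (forall m n (h : leN2 m n),
        rng (x (om h)) = xo m /\ src (x (om h)) = xo n /\
        deg (x (om h)) = subN2 n m) /\
    (forall m n p (h1 : leN2 m n) (h2 : leN2 n p) (h3 : leN2 m p),
        x (om h3) = cmp (x (om h1)) (x (om h2))).

Definition path_rng (x : ipath) : Obj L := rng (x (om (leN2_refl zeroN2))).

Definition shift (p : N2) (x : ipath) : ipath :=
  fun w : O2Mor => x (om (leN2_addr p (proj2_sig w))).

(** x = l z : the (unique) infinite path with x(0, d l) = l and sigma^{d l} x = z *)
Definition cat_is (l : Mor L) (z x : ipath) : Prop :=
  is_inf_path x /\ x (om (leN2_0 (deg l))) = l /\ shift (deg l) x = z.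

Definition cyl (l : Mor L) (x : ipath) : Prop :=
  exists z, is_inf_path z /\ path_rng z = src l /\ cat_is l z x.

Definition basisInf (U : ipath -> Prop) : Prop :=
  exists l : Mor L, forall x, U x <-> cyl l x.

Record gelt := GElt { gx : ipath; gk : int * int; gy : ipath }.

Definition diffZ (a b : N2) : int * int :=
  ((Posz a.1 - Posz b.1)%R, (Posz a.2 - Posz b.2)%R).

Definition in_G (g : gelt) : Prop :=
  is_inf_path (gx g) /\ is_inf_path (gy g) /\
  exists l m : N2, gk g = diffZ l m /\ shift l (gx g) = shift m (gy g).

Definition composable (g h : gelt) : Prop := gy g = gx h.
Definition gmul (g h : gelt) : gelt :=
  GElt (gx g) (((gk g).1 + (gk h).1)%R, ((gk g).2 + (gk h).2)%R) (gy h).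

Definition bcyl (l m : Mor L) (g : gelt) : Prop :=
  exists z, is_inf_path z /\ path_rng z = src l /\
    cat_is l z (gx g) /\ cat_is m z (gy g) /\ gk g = diffZ (deg l) (deg m).

Definition basisG (U : gelt -> Prop) : Prop :=
  exists l m : Mor L, src l = src m /\ forall g, U g <-> bcyl l m g.

End TwoGraphDefs.

(** topology on a subset X of T generated by the family B of subsets of X *)
Definition gen_open {T : Type} (X : T -> Prop) (B : (T -> Prop) -> Prop)
    (U : T -> Prop) : Prop :=
  (forall x, U x -> X x) /\
  forall x, U x -> exists bs : list (T -> Prop),
    Forall B bs /\ Forall (fun b => b x) bs /\
    forall y, X y -> Forall (fun b => b y) bs -> U y.

Definition homeo_on {T : Type} (X : T -> Prop) (B : (T -> Prop) -> Prop)
    (f : T -> T) : Prop :=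
  (forall x, X x -> X (f x)) /\
  (forall x y, X x -> X y -> f x = f y -> x = y) /\
  (forall y, X y -> exists x, X x /\ f x = y) /\
  (forall V, gen_open X B V -> gen_open X B (fun x => X x /\ V (f x))) /\
  (forall U, gen_open X B U -> gen_open X B (fun y => exists x, U x /\ f x = y)).

Definition top_groupoid_aut (L : two_graph) (phi : gelt L -> gelt L) : Prop :=
  homeo_on (@in_G L) (@basisG L) phi /\
  (forall g h, in_G g -> in_G h ->
     (composable (phi g) (phi h) <-> composable g h)) /\
  (forall g h, in_G g -> in_G h -> composable g h ->
     phi (gmul g h) = gmul (phi g) (phi h)).

Definition alpha_spec (L : two_graph) (level : Obj L -> nat)
    (a : Mor L -> Mor L) : Prop :=
  forall (n : nat) (e : Mor L), is_blue e -> level (rng e) = n ->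
    a e = iter (mseq level n) (@Fmap L) e.

(* In each level the red edges form a permutation of the vertices:
   a vertex receives at most one red edge because it lies on an isolated red
   cycle, and by counting in the finite level it also emits exactly one.
   Sliding these red edges across a morphism, f_{r(l)} l = Fhat(l) f_{s(l)},
   defines a degree-preserving injective functor Fhat extending F.  Put
   alpha(l) = Fhat^{m_n}(l) for red paths and blue edges l with range in V_n, and
   extend alpha multiplicatively along the blue edges of a path.  Since n O_n is
   a multiple of the length of every red cycle in V_{n+1}, the powers Fhat^{m_n}
   and Fhat^{m_{n+1}} agree on V_{n+1} and on its red paths; this makes alpha a
   functor.  It is bijective because it maps each finite set of morphisms of a
   fixed degree with range in V_n injectively into itself.  An automorphism that
   agrees with alpha on blue edges agrees with it on vertices (every vertex
   receives a blue edge) and on red paths (determined by range and degree).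
   Finally, composing with alpha and with its inverse maps cylinder sets Z(l),
   Z(l, m) to cylinder sets, which gives the two homeomorphisms. *)

From Stdlib Require Import ClassicalEpsilon FunctionalExtensionality Classical List.
From HB Require Import structures.
From mathcomp Require Import all_boot all_algebra.
From mathcomp Require Import zify.
Set Implicit Arguments. Unset Strict Implicit. Unset Printing Implicit Defensive.

Lemma map_uniq_inj_in (T U : eqType) (f : T -> U) (s : seq T) :
  uniq (map f s) -> {in s &, injective f}.
Proof.
elim: s => //= a s IH /andP[fa_notin us] x y.
rewrite !inE => /orP[/eqP->|xs] /orP[/eqP->|ys] // fxy.
- by case/negP: fa_notin; rewrite fxy map_f.
- by case/negP: fa_notin; rewrite -fxy map_f.
- exact: IH.
Qed.

Lemma inj_in_onto (T : eqType) (s : seq T) (f : T -> T) :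
  uniq s -> {in s, forall x, f x \in s} -> {in s &, injective f} ->
  forall y, y \in s -> exists2 x, x \in s & f x = y.
Proof.
move=> us fs fi y ys.
have um : uniq (map f s) by rewrite map_inj_in_uniq.
have sub : {subset map f s <= s} by move=> z /mapP[x xs ->]; apply: fs.
have [_ eq_s] := uniq_min_size um sub (eq_leq (esym (size_map f s))).
by move: ys; rewrite -eq_s => /mapP[x xs ->]; exists x.
Qed.

Lemma onto_inj_in (T U : eqType) (s : seq T) (t : seq U) (g : T -> U) :
  uniq t -> size s <= size t -> {subset t <= map g s} -> {in s &, injective g}.
Proof.
by move=> ut st sub; apply/map_uniq_inj_in/(leq_size_uniq ut sub); rewrite size_map.
Qed.

Lemma inj_in_periodic (T : choiceType) (s : seq T) (f : T -> T) :
  {in s, forall x, f x \in s} -> {in s &, injective f} ->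
  forall x, x \in s -> exists2 k, 0 < k & iter k f x = x.
Proof.
move=> fs fi x xs.
pose f' (y : seq_sub s) : seq_sub s := SeqSub (fs _ (ssvalP y)).
have f'_inj : injective f'.
  by move=> a b /(congr1 val) /fi ab; apply/val_inj/ab; apply: ssvalP.
have val_iter k y : val (iter k f' y) = iter k f (val y).
  by elim: k => //= k ->.
exists (order f' (SeqSub xs)); first exact: order_gt0.
by have := congr1 val (iter_order f'_inj (SeqSub xs)); rewrite val_iter.
Qed.

Lemma N2E (x y : N2) : x = y <-> x.1 = y.1 /\ x.2 = y.2.
Proof. by case: x; case: y => a b c d /=; split => [[-> ->]|[-> ->]]. Qed.

Ltac n2_lia := apply/N2E; rewrite /addN2 /subN2 /zeroN2 /e1 /e2 /=; split; lia.

Section TwoGraph.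
Variable L : two_graph.
Implicit Types (l f g h : Mor L) (v w : Obj L).

Lemma factor_uniq (p1 p2 q1 q2 : Mor L) :
  deg p1 = deg q1 -> deg p2 = deg q2 -> src p1 = rng p2 -> src q1 = rng q2 ->
  cmp p1 p2 = cmp q1 q2 -> p1 = q1 /\ p2 = q2.
Proof.
move=> d1 d2 s1 s2 e.
have [p [_ U]] := factorisation (deg_cmp s1).
have A := U (p1, p2) (conj erefl (conj erefl (conj s1 erefl))).
have B := U (q1, q2) (conj (esym d1) (conj (esym d2) (conj s2 e))).
by rewrite A in B; case: B.
Qed.

Lemma factor_ex l m n : deg l = addN2 m n -> exists p q,
  deg p = m /\ deg q = n /\ src p = rng q /\ l = cmp p q.
Proof.
by move=> d; have [[p q] [[? [? [? ?]]] _]] := factorisation d; exists p, q.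
Qed.

Lemma deg0_idm l : deg l = zeroN2 -> l = idm (rng l).
Proof.
move=> d; have [] := @factor_uniq (idm (rng l)) l l (idm (src l)).
- by rewrite deg_idm d.
- by rewrite deg_idm d.
- by rewrite src_idm.
- by rewrite rng_idm.
- by rewrite cmp_idl cmp_idr.
by move=> ->.
Qed.

Lemma deg0_src_rng l : deg l = zeroN2 -> src l = rng l.
Proof. by move=> /deg0_idm E; rewrite E src_idm rng_idm. Qed.

Lemma idm_inj : injective (@idm L).
Proof. by move=> v w e; rewrite -(rng_idm v) e rng_idm. Qed.

Lemma isolated_prefix_uniq l k1 k2 : is_isolated l ->
  deg k1 <> zeroN2 -> leN2 (deg k1) (deg l) -> deg k2 = deg k1 ->
  rng k1 = rng l -> rng k2 = rng l -> k1 = k2.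
Proof.
move=> iso k1_nz /andP[le1 le2] d21 r1 r2.
have dl : deg l = addN2 (deg k1) (subN2 (deg l) (deg k1)) by n2_lia.
have [p [q [dp [_ [spq lpq]]]]] := factor_ex dl.
have [U _] := iso p q spq lpq (ltac:(by rewrite dp)).
by rewrite (U k1 r1 (esym dp)) (U k2 r2 (etrans d21 (esym dp))).
Qed.

End TwoGraph.

Section Bratteli.
Variable L : two_graph.
Variable level : Obj L -> nat.
Hypothesis HB : rank2_bratteli level.
Implicit Types (l f g h : Mor L) (v w : Obj L).

Let row_fin : row_finite L. Proof. by case: HB. Qed.
Let level_finite n : exists s : seq (Obj L), forall v, level v = n -> v \in s.
Proof. by case: HB => _ [_ [H _]]. Qed.
Let blue_level e : is_blue e -> level (src e) = (level (rng e)).+1.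
Proof. by case: HB => _ [_ [_ [H _]]]; apply: H. Qed.
Let blue_in v : exists e, is_blue e /\ rng e = v.
Proof. by case: HB => _ [_ [_ [_ [H _]]]]. Qed.
Let sinks_level0 v : (forall e, is_blue e -> src e <> v) -> level v = 0.
Proof. by case: HB => _ [_ [_ [_ [_ [H _]]]]]; apply: H. Qed.
Let red_cycle_through v :
  exists l, is_red_path l /\ is_cycle l /\ is_isolated l /\ lies_on v l.
Proof. by case: HB => _ [_ [_ [_ [_ [_ [H _]]]]]]. Qed.
Let red_level f : is_red f -> level (rng f) = level (src f).
Proof. by case: HB => _ [_ [_ [_ [_ [_ [_ H]]]]]]; apply: H. Qed.

Lemma red_in_uniq h1 h2 : is_red h1 -> is_red h2 -> rng h1 = rng h2 -> h1 = h2.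
Proof.
move=> r1 r2 r12.
have [l [l_red [[l_nz [l_loop _]] [iso [l' [l'' [sl' [ll' src_l']]]]]]]] :=
  red_cycle_through (rng h1).
have dl : deg l = addN2 (deg l') (deg l'') by rewrite ll' deg_cmp.
move: l_red dl; rewrite /is_red_path => l_red /N2E [/= dl1 dl2].
have l_pos : 0 < (deg l).2.
  by case: ltnP => // l0; case: l_nz; apply/N2E; split => /=; lia.
case: (ltnP 0 (deg l'').2) => [l''_pos|l''0].
  have sh1 : src l' = rng h1 by [].
  have sh2 : src l' = rng h2 by rewrite -r12.
  have pre i : is_red i -> src l' = rng i ->
    deg (cmp l' i) = addN2 (deg l') e2 /\ rng (cmp l' i) = rng l.
    by move=> ri si; rewrite deg_cmp // ri rng_cmp // ll' rng_cmp.
  have [d1 rg1] := pre h1 r1 sh1; have [d2 rg2] := pre h2 r2 sh2.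
  have E : cmp l' h1 = cmp l' h2.
    apply: (isolated_prefix_uniq iso); rewrite ?d1 ?d2 //.
      by move/N2E => /= [_]; lia.
    by rewrite /leN2 /addN2 /=; apply/andP; split; lia.
  by have [] := factor_uniq erefl (etrans r1 (esym r2)) sh1 sh2 E.
have l''0' : deg l'' = zeroN2 by apply/N2E; split => /=; lia.
have rl : rng h1 = rng l.
  by rewrite l_loop ll' src_cmp // deg0_src_rng // -sl'.
apply: (isolated_prefix_uniq iso).
- by rewrite r1 => /N2E [].
- by rewrite r1 /leN2 /= l_pos.
- by rewrite r1 r2.
- exact: rl.
- by rewrite -r12.
Qed.

Lemma red_loop v :
  exists mu, (deg mu).1 = 0 /\ 0 < (deg mu).2 /\ src mu = v /\ rng mu = v.
Proof.
have [l [l_red [[l_nz [l_loop _]] [_ [l' [l'' [sl' [ll' src_l']]]]]]]] :=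
  red_cycle_through v.
have dl : deg l = addN2 (deg l') (deg l'') by rewrite ll' deg_cmp.
move: l_red dl; rewrite /is_red_path => l_red /N2E [/= dl1 dl2].
have s'' : src l'' = rng l' by rewrite -(src_cmp sl') -ll' -l_loop ll' rng_cmp.
exists (cmp l'' l'); rewrite deg_cmp // src_cmp // rng_cmp // /addN2 /=.
do ! split => //; [lia | | by rewrite -sl'].
by case: ltnP => l0; [lia | case: l_nz; apply/N2E; split => /=; lia].
Qed.

Lemma red_out_ex v : exists f, is_red f /\ src f = v.
Proof.
have [mu [d1 [d2 [smu _]]]] := red_loop v.
have dmu : deg mu = addN2 (0, (deg mu).2 - 1)%N e2 by n2_lia.
have [p [q [_ [dq [spq Emu]]]]] := factor_ex dmu.
by exists q; split => //; rewrite -smu Emu src_cmp.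
Qed.

Lemma morphisms_over (vs : seq (Obj L)) d :
  exists s : seq (Mor L), forall l, rng l \in vs -> deg l = d -> l \in s.
Proof.
elim: vs => [|v vs [s hs]]; first by exists [::].
have [t ht] := row_fin v d.
exists (t ++ s) => l; rewrite inE mem_cat => /orP[/eqP rl|rl] dl.
  by rewrite ht.
by rewrite hs ?orbT.
Qed.

Lemma level_morphisms d n : exists s : seq (Mor L), uniq s /\
  forall l, l \in s <-> deg l = d /\ level (rng l) = n.
Proof.
have [vs hvs] := level_finite n.
have [s hs] := morphisms_over vs d.
exists (undup [seq l <- s | (deg l == d) && (level (rng l) == n)]).
split => [|l]; first exact: undup_uniq.
rewrite mem_undup mem_filter; split; first by case/andP => /andP[/eqP-> /eqP->].
by case=> dl ln; rewrite dl ln !eqxx hs // hvs.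
Qed.

Lemma level_vertices n : exists s : seq (Obj L), uniq s /\
  forall v, v \in s <-> level v = n.
Proof.
have [vs hvs] := level_finite n.
exists (undup [seq v <- vs | level v == n]); split => [|v]; first exact: undup_uniq.
rewrite mem_undup mem_filter; split; first by case/andP => /eqP.
by move=> vn; rewrite vn eqxx hvs.
Qed.

(* In a level, [rng] is injective on red edges and [src] maps them onto the
   vertices, so by counting [src] is injective too. *)
Lemma red_out_uniq f1 f2 : is_red f1 -> is_red f2 -> src f1 = src f2 -> f1 = f2.
Proof.
move=> r1 r2 s12; set n := level (src f1).
have [Es [uEs hEs]] := level_morphisms e2 n.
have [Vs [uVs hVs]] := level_vertices n.
have rng_inj : {in Es &, injective rng}.
  by move=> a b /hEs[ra _] /hEs[rb _]; apply: red_in_uniq.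
have size_Es : size Es <= size Vs.
  rewrite -(size_map rng); apply: uniq_leq_size; first by rewrite map_inj_in_uniq.
  by move=> v /mapP[a /hEs[_ an] ->]; apply/hVs.
have src_onto : {subset Vs <= map src Es}.
  move=> v /hVs vn; have [f [rf sf]] := red_out_ex v.
  by apply/mapP; exists f => //; apply/hEs; rewrite red_level // sf.
apply: (onto_inj_in uVs size_Es src_onto _ _ s12); apply/hEs.
  by rewrite red_level.
by rewrite red_level // -s12.
Qed.

Lemma red_path_uniq (mu nu : Mor L) :
  (deg mu).1 = 0 -> deg nu = deg mu -> rng nu = rng mu -> nu = mu.
Proof.
move dk : (deg mu).2 => k; elim: k mu nu dk => [|k IH] mu nu dk d1 dd rr.
  have d0 : deg mu = zeroN2 by apply/N2E.
  by rewrite (deg0_idm d0) (deg0_idm (etrans dd d0)) rr.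
have dmu : deg mu = addN2 e2 (0, k)%N by n2_lia.
have [h [m [dh [dm [shm Emu]]]]] := factor_ex dmu.
have [h' [m' [dh' [dm' [shm' Enu]]]]] := factor_ex (etrans dd dmu).
have hh : h' = h.
  by apply: red_in_uniq => //; rewrite -(rng_cmp shm) -Emu -(rng_cmp shm') -Enu.
rewrite Emu Enu hh; congr cmp; apply: IH; rewrite ?dm ?dm' //.
by rewrite -shm -shm' hh.
Qed.

Lemma level_src l : level (src l) = level (rng l) + (deg l).1.
Proof.
move dk : ((deg l).1 + (deg l).2) => k; elim: k l dk => [|k IH] l dk.
  have d0 : deg l = zeroN2 by apply/N2E; split => /=; lia.
  by rewrite d0 deg0_src_rng ?addn0.
case: (posnP (deg l).1) => [l1|l1].
  have dl : deg l = addN2 e2 ((deg l).1, (deg l).2 - 1) by n2_lia.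
  have [f [m [df [dm [sfm Elm]]]]] := factor_ex dl.
  rewrite Elm src_cmp // rng_cmp // IH; last by rewrite dm /=; lia.
  by rewrite -sfm -red_level // dm -Elm.
have dl : deg l = addN2 e1 ((deg l).1 - 1, (deg l).2) by n2_lia.
have [e [m [de [dm [sem Elm]]]]] := factor_ex dl.
rewrite Elm src_cmp // rng_cmp // IH; last by rewrite dm /=; lia.
rewrite -sem blue_level // dm -Elm /=; lia.
Qed.

Lemma red_level_eq l : (deg l).1 = 0 -> level (src l) = level (rng l).
Proof. by move=> h; rewrite level_src h addn0. Qed.

Definition red_out v : Mor L :=
  epsilon (inhabits (idm v)) (fun f => is_red f /\ src f = v).

Lemma red_outP v : is_red (red_out v) /\ src (red_out v) = v.
Proof. exact: (epsilon_spec _ (fun f => is_red f /\ src f = v) (red_out_ex v)). Qed.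

Lemma red_out_red v : is_red (red_out v). Proof. by case: (red_outP v). Qed.
Lemma red_out_src v : src (red_out v) = v. Proof. by case: (red_outP v). Qed.

Lemma red_outE f : is_red f -> f = red_out (src f).
Proof. by move=> rf; apply: red_out_uniq => //; [apply: red_out_red | rewrite red_out_src]. Qed.

Definition red_next v : Obj L := rng (red_out v).

Lemma red_next_level v : level (red_next v) = level v.
Proof. by rewrite /red_next red_level ?red_out_src //; apply: red_out_red. Qed.

Lemma iter_red_next_level k v : level (iter k red_next v) = level v.
Proof. by elim: k => //= k IH; rewrite red_next_level. Qed.

Definition Fhat_spec l mu := deg mu = deg l /\ src mu = red_next (src l) /\
  cmp (red_out (rng l)) l = cmp mu (red_out (src l)).

Definition Fhat l : Mor L := epsilon (inhabits l) (Fhat_spec l).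

Lemma Fhat_ex l : exists mu, Fhat_spec l mu.
Proof.
have dl : deg (cmp (red_out (rng l)) l) = addN2 (deg l) e2.
  rewrite deg_cmp ?red_out_src // red_out_red; n2_lia.
have [p [q [dp [dq [spq Epq]]]]] := factor_ex dl.
have sq : src q = src l by rewrite -(src_cmp spq) -Epq src_cmp ?red_out_src.
have qE : q = red_out (src l) by rewrite (red_outE dq) sq.
by exists p; rewrite /Fhat_spec dp spq Epq qE.
Qed.

Lemma FhatP l : Fhat_spec l (Fhat l).
Proof. exact: (epsilon_spec _ (Fhat_spec l) (Fhat_ex l)). Qed.

Lemma Fhat_deg l : deg (Fhat l) = deg l. Proof. by case: (FhatP l). Qed.
Lemma Fhat_src l : src (Fhat l) = red_next (src l). Proof. by case: (FhatP l) => _ []. Qed.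
Lemma Fhat_square l : cmp (red_out (rng l)) l = cmp (Fhat l) (red_out (src l)).
Proof. by case: (FhatP l) => _ []. Qed.

Lemma Fhat_rng l : rng (Fhat l) = red_next (rng l).
Proof.
have := congr1 rng (Fhat_square l).
by rewrite rng_cmp ?red_out_src // rng_cmp // Fhat_src.
Qed.

Lemma Fhat_uniq l mu : deg mu = deg l -> src mu = red_next (src l) ->
  cmp (red_out (rng l)) l = cmp mu (red_out (src l)) -> mu = Fhat l.
Proof.
move=> d s e; have [] := @factor_uniq _ mu (red_out (src l)) (Fhat l) (red_out (src l)).
- by rewrite Fhat_deg.
- by [].
- by rewrite s.
- by rewrite Fhat_src.
- by rewrite -e Fhat_square.
by [].
Qed.

Lemma Fhat_cmp l m : src l = rng m -> Fhat (cmp l m) = cmp (Fhat l) (Fhat m).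
Proof.
move=> s; have s' : src (Fhat l) = rng (Fhat m) by rewrite Fhat_src Fhat_rng s.
symmetry; apply: Fhat_uniq.
- by rewrite !deg_cmp // !Fhat_deg.
- by rewrite !src_cmp // Fhat_src.
rewrite rng_cmp // src_cmp // -cmpA ?red_out_src // Fhat_square s.
rewrite cmpA ?Fhat_src ?Fhat_rng ?red_out_src ?s // Fhat_square.
by rewrite cmpA ?Fhat_src ?Fhat_rng ?red_out_src ?s.
Qed.

Lemma Fhat_idm v : Fhat (idm v) = idm (red_next v).
Proof.
symmetry; apply: Fhat_uniq; rewrite ?deg_idm ?src_idm //.
by rewrite rng_idm cmp_idl; have := cmp_idr (red_out v); rewrite red_out_src.
Qed.

Lemma Fhat_inj : injective Fhat.
Proof.
move=> l l' e.
have rr : red_out (src l) = red_out (src l').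
  apply: red_in_uniq; try exact: red_out_red.
  by rewrite -[LHS]/(red_next _) -[RHS]/(red_next _) -!Fhat_src e.
have E : cmp (red_out (rng l)) l = cmp (red_out (rng l')) l'.
  by rewrite !Fhat_square e rr.
have [] := factor_uniq _ _ _ _ E; rewrite ?red_out_src ?red_out_red //.
by rewrite -(Fhat_deg l) -(Fhat_deg l') e.
Qed.

Lemma iter_Fhat_deg k l : deg (iter k Fhat l) = deg l.
Proof. by elim: k => //= k IH; rewrite Fhat_deg. Qed.
Lemma iter_Fhat_src k l : src (iter k Fhat l) = iter k red_next (src l).
Proof. by elim: k => //= k IH; rewrite Fhat_src IH. Qed.
Lemma iter_Fhat_rng k l : rng (iter k Fhat l) = iter k red_next (rng l).
Proof. by elim: k => //= k IH; rewrite Fhat_rng IH. Qed.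
Lemma iter_Fhat_cmp k l m : src l = rng m ->
  iter k Fhat (cmp l m) = cmp (iter k Fhat l) (iter k Fhat m).
Proof.
by move=> s; elim: k => //= k ->; rewrite Fhat_cmp // iter_Fhat_src iter_Fhat_rng s.
Qed.
Lemma iter_Fhat_idm k v : iter k Fhat (idm v) = idm (iter k red_next v).
Proof. by elim: k => //= k ->; rewrite Fhat_idm. Qed.
Lemma iter_Fhat_inj k : injective (iter k Fhat).
Proof. by elim: k => //= k IH l l' /Fhat_inj /IH. Qed.

Lemma Fmap_Fhat e : is_blue e -> Fmap e = Fhat e.
Proof.
move=> be.
pose P g := exists f f' : Mor L, is_red f /\ is_red f' /\ src f = rng e /\
  is_blue g /\ src g = rng f' /\ cmp f e = cmp g f'.
have : P (Fmap e).
  apply: (epsilon_spec _ P); exists (Fhat e), (red_out (rng e)), (red_out (src e)).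
  rewrite /is_blue Fhat_deg Fhat_src red_out_src -Fhat_square.
  by do ! split => //; apply: red_out_red.
case=> f [f' [rf [rf' [sf [bg [sg E]]]]]].
have f'E : f' = red_out (src e) by rewrite (red_outE rf') -(src_cmp sg) -E src_cmp.
apply: Fhat_uniq.
- by rewrite bg be.
- by rewrite sg /red_next -f'E.
- by rewrite -f'E -E (red_outE rf) sf.
Qed.

Lemma iter_Fmap k e : is_blue e -> iter k (@Fmap L) e = iter k Fhat e.
Proof.
move=> be; elim: k => //= k ->.
by apply: Fmap_Fhat; rewrite /is_blue iter_Fhat_deg.
Qed.

Lemma levelEdgesP n : uniq (levelEdges level n) /\
  forall e, e \in levelEdges level n <-> is_blue e /\ level (rng e) = n.
Proof.
apply: (epsilon_spec _ (fun s => uniq s /\ forall e, e \in s <-> is_blue e /\ level (rng e) = n)).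
exact: level_morphisms.
Qed.

Lemma Fmap_periodic e : is_blue e -> exists2 k, 0 < k & iter k (@Fmap L) e = e.
Proof.
move=> be; have [_ hs] := levelEdgesP (level (rng e)).
have [k k_gt0 ek] : exists2 k, 0 < k & iter k Fhat e = e.
  apply: (@inj_in_periodic _ (levelEdges level (level (rng e)))); last exact/hs.
  - move=> x /hs[bx lx]; apply/hs; split; first by rewrite /is_blue Fhat_deg.
    by rewrite Fhat_rng red_next_level.
  - by move=> x y _ _; apply: Fhat_inj.
by exists k; rewrite // iter_Fmap.
Qed.

Lemma orderFP e : is_blue e -> iter (orderF e) (@Fmap L) e = e.
Proof.
move=> be.
have ex : exists k, (0 < k) && (iter k (@Fmap L) e == e).
  by have [k k_gt0 ek] := Fmap_periodic be; exists k; rewrite k_gt0 ek eqxx.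
have [|_ [] //] := epsilon_spec (inhabits 0) (fun k => 0 < k /\ iter k (@Fmap L) e = e /\
    forall j, 0 < j -> iter j (@Fmap L) e = e -> k <= j).
case: (ex_minnP ex) => m /andP[m_gt0 /eqP em] m_min.
exists m; split => //; split => // j j_gt0 ej.
by apply: m_min; rewrite j_gt0 ej eqxx.
Qed.

(* A vertex of level n+1 is the source of a blue edge e of level n, and its
   orbit under [red_next] has length dividing o(e), a divisor of O_n. *)
Lemma red_next_period n w : level w = n.+1 -> iter (n * Olcm level n) red_next w = w.
Proof.
move=> lw.
have [e [be sew]] : exists e, is_blue e /\ src e = w.
  apply: NNPP => no_e; have := sinks_level0 (fun e be sw => no_e (ex_intro _ e (conj be sw))).
  by rewrite lw.
have le : level (rng e) = n by have := blue_level be; rewrite sew lw => -[].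
have orbit_e : iter (orderF e) red_next w = w.
  by rewrite -sew -iter_Fhat_src -iter_Fmap // orderFP.
have [_ hs] := levelEdgesP n.
have /dvdnP[q ->] : orderF e %| Olcm level n.
  have e_in : e \in levelEdges level n by apply/hs.
  by rewrite /Olcm (big_rem _ e_in) /= dvdn_lcml.
by rewrite mulnA iterM iter_fix.
Qed.

Lemma iter_mseqS n w : level w = n.+1 ->
  iter (mseq level n.+1) red_next w = iter (mseq level n) red_next w.
Proof. by move=> lw; rewrite /= iterD red_next_period. Qed.

Definition mlev v := mseq level (level v).
Definition alpha_obj v := iter (mlev v) red_next v.
Definition Fm l := iter (mlev (rng l)) Fhat l.

Lemma alpha_obj_level v : level (alpha_obj v) = level v.
Proof. exact: iter_red_next_level. Qed.

Lemma Fm_deg l : deg (Fm l) = deg l.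
Proof. exact: iter_Fhat_deg. Qed.

Lemma Fm_rng l : rng (Fm l) = alpha_obj (rng l).
Proof. exact: iter_Fhat_rng. Qed.

Lemma Fm_src_red l : (deg l).1 = 0 -> src (Fm l) = alpha_obj (src l).
Proof. by move=> l1; rewrite iter_Fhat_src /alpha_obj /mlev red_level_eq. Qed.

Lemma Fm_src_blue e : is_blue e -> src (Fm e) = alpha_obj (src e).
Proof.
by move=> be; rewrite iter_Fhat_src /alpha_obj /mlev (blue_level be) iter_mseqS ?blue_level.
Qed.

Lemma Fm_cmp_red l m : (deg l).1 = 0 -> src l = rng m ->
  Fm (cmp l m) = cmp (Fm l) (iter (mlev (rng l)) Fhat m).
Proof. by move=> l1 s; rewrite /Fm iter_Fhat_cmp // rng_cmp. Qed.

Lemma Fm_red_below e l : is_blue e -> src e = rng l -> (deg l).1 = 0 ->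
  Fm l = iter (mlev (rng e)) Fhat l.
Proof.
move=> be s l1; apply: red_path_uniq; rewrite ?iter_Fhat_deg //.
by rewrite iter_Fhat_rng -s -iter_Fhat_src Fm_src_blue // Fm_rng s.
Qed.

Definition blue_split_spec l (p : Mor L * Mor L) := deg p.1 = e1 /\
  deg p.2 = subN2 (deg l) e1 /\ src p.1 = rng p.2 /\ l = cmp p.1 p.2.

Definition blue_split l := epsilon (inhabits (l, l)) (blue_split_spec l).

Fixpoint alpha_rec (a : nat) l : Mor L :=
  if a is a'.+1 then cmp (Fm (blue_split l).1) (alpha_rec a' (blue_split l).2)
  else Fm l.

Definition alpha l := alpha_rec (deg l).1 l.

Lemma alpha_red l : (deg l).1 = 0 -> alpha l = Fm l.
Proof. by rewrite /alpha => ->. Qed.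

Lemma alpha_cons e m : is_blue e -> src e = rng m ->
  alpha (cmp e m) = cmp (Fm e) (alpha m).
Proof.
move=> be s.
have dem : deg (cmp e m) = addN2 e1 (deg m) by rewrite deg_cmp // be.
have dm : subN2 (deg (cmp e m)) e1 = deg m by rewrite dem; n2_lia.
have [d1 [d2 [s' E]]] : blue_split_spec (cmp e m) (blue_split (cmp e m)).
  by apply: (epsilon_spec _ (blue_split_spec _)); exists (e, m); rewrite /blue_split_spec dm.
have [E1 E2] := factor_uniq (etrans d1 (esym be)) (etrans d2 dm) s' s (esym E).
by rewrite /alpha dem /= E1 E2.
Qed.

Lemma blue_first_ind (P : Mor L -> Prop) :
  (forall l, (deg l).1 = 0 -> P l) ->
  (forall e m, is_blue e -> src e = rng m -> P m -> P (cmp e m)) -> forall l, P l.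
Proof.
move=> Pred Pcons l; move dk : (deg l).1 => k.
elim: k l dk => [|k IH] l dk; first exact: Pred.
have dl : deg l = addN2 e1 ((deg l).1 - 1, (deg l).2) by n2_lia.
have [e [m [de [dm [sem ->]]]]] := factor_ex dl.
by apply: Pcons => //; apply: IH; rewrite dm /=; lia.
Qed.

Lemma alpha_rng_src l :
  rng (alpha l) = alpha_obj (rng l) /\ src (alpha l) = alpha_obj (src l).
Proof.
elim/blue_first_ind: l => [l l1|e m be s [IHr IHs]].
  by rewrite alpha_red // Fm_rng Fm_src_red.
have c : src (Fm e) = rng (alpha m) by rewrite Fm_src_blue // IHr s.
by rewrite alpha_cons // rng_cmp // src_cmp // Fm_rng rng_cmp // src_cmp.
Qed.

Lemma alpha_rng l : rng (alpha l) = alpha_obj (rng l).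
Proof. by case: (alpha_rng_src l). Qed.

Lemma alpha_src l : src (alpha l) = alpha_obj (src l).
Proof. by case: (alpha_rng_src l). Qed.

Lemma Fm_src_alpha e m : is_blue e -> src e = rng m -> src (Fm e) = rng (alpha m).
Proof. by move=> be s; rewrite Fm_src_blue // alpha_rng s. Qed.

Lemma alpha_deg l : deg (alpha l) = deg l.
Proof.
elim/blue_first_ind: l => [l l1|e m be s IH]; first by rewrite alpha_red // Fm_deg.
rewrite alpha_cons // deg_cmp; last exact: Fm_src_alpha.
by rewrite IH Fm_deg deg_cmp.
Qed.

Lemma alpha_idm v : alpha (idm v) = idm (alpha_obj v).
Proof. by rewrite alpha_red ?deg_idm // /Fm iter_Fhat_idm rng_idm. Qed.

Lemma red_blue_swap l e : (deg l).1 = 0 -> is_blue e -> src l = rng e ->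
  exists e' l', is_blue e' /\ (deg l').1 = 0 /\ src e' = rng l' /\
    cmp l e = cmp e' l' /\ rng e' = rng l /\ src l' = src e.
Proof.
move=> l1 be s.
have dle : deg (cmp l e) = addN2 e1 (0, (deg l).2) by rewrite deg_cmp // be; n2_lia.
have [e' [l' [de' [dl' [s' E]]]]] := factor_ex dle.
exists e', l'; rewrite dl' -(rng_cmp s') -(src_cmp s') -E rng_cmp // src_cmp //.
Qed.

(* Swap the red path l past the first blue edge of m; the red part moves one
   level down, where Fhat^{m_{n+1}} and Fhat^{m_n} agree ([Fm_red_below]). *)
Lemma alpha_cmp_red l m : (deg l).1 = 0 -> src l = rng m ->
  alpha (cmp l m) = cmp (alpha l) (alpha m).
Proof.
elim/blue_first_ind: m l => [m m1|e m be sem IH] l l1 s.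
  have lm1 : (deg (cmp l m)).1 = 0 by rewrite deg_cmp // /addN2 /= l1 m1.
  by rewrite !alpha_red // Fm_cmp_red // /Fm -s /mlev red_level_eq.
have [e' [l' [be' [l'1 [s' [E [re' sl']]]]]]] := red_blue_swap l1 be (etrans s (rng_cmp sem)).
set k := mlev (rng l).
have ke : mlev (rng e) = k by rewrite /k /mlev -(rng_cmp sem) -s red_level_eq.
have ke' : mlev (rng e') = k by rewrite /k re'.
have sle : src l = rng e by rewrite s rng_cmp.
have sl'm : src l' = rng m by rewrite sl'.
rewrite -cmpA // E cmpA // alpha_cons //; last by rewrite rng_cmp.
rewrite IH // (alpha_red l1) alpha_red // (alpha_cons be sem).
rewrite (Fm_red_below be' s' l'1) /Fm ke' ke -/k.
have se'k : src (iter k Fhat e') = rng (iter k Fhat l').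
  by rewrite iter_Fhat_src iter_Fhat_rng s'.
have slk : src (iter k Fhat l) = rng (iter k Fhat e).
  by rewrite iter_Fhat_src iter_Fhat_rng sle.
have sl'k : src (iter k Fhat l') = rng (alpha m).
  by rewrite iter_Fhat_src sl' -ke -iter_Fhat_src; apply: Fm_src_alpha.
have sek : src (iter k Fhat e) = rng (alpha m) by rewrite -ke; apply: Fm_src_alpha.
by rewrite -(cmpA se'k sl'k) -(cmpA slk sek) -!iter_Fhat_cmp // E.
Qed.

Lemma alpha_cmp l m : src l = rng m -> alpha (cmp l m) = cmp (alpha l) (alpha m).
Proof.
elim/blue_first_ind: l m => [l l1|e l be sel IH] m s; first exact: alpha_cmp_red.
have slm : src l = rng m by rewrite -s src_cmp.
rewrite cmpA // alpha_cons // ?rng_cmp // IH // alpha_cons // cmpA //.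
  exact: Fm_src_alpha.
by rewrite alpha_src alpha_rng slm.
Qed.

Lemma alpha_inj : injective alpha.
Proof.
move=> l; elim/blue_first_ind: l => [l l1|e m be s IH] l' E.
  have dd : deg l' = deg l by rewrite -alpha_deg -E alpha_deg.
  have l'1 : (deg l').1 = 0 by rewrite dd.
  have lv : level (rng l) = level (rng l').
    by rewrite -(alpha_obj_level (rng l)) -(alpha_obj_level (rng l')) -!alpha_rng E.
  by move: E; rewrite !alpha_red // /Fm /mlev lv => /iter_Fhat_inj.
have dd : deg l' = deg (cmp e m) by rewrite -alpha_deg -E alpha_deg.
have dl' : deg l' = addN2 e1 (deg m) by rewrite dd deg_cmp // be.
have [e' [m' [be' [dm' [s' El']]]]] := factor_ex dl'.
move: E; rewrite El' !alpha_cons // => E.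
have d1 : deg (Fm e) = deg (Fm e') by rewrite !Fm_deg be be'.
have d2 : deg (alpha m) = deg (alpha m') by rewrite !alpha_deg dm'.
have [E1 E2] := factor_uniq d1 d2 (Fm_src_alpha be s) (Fm_src_alpha be' s') E.
have lv : level (rng e) = level (rng e').
  by rewrite -(alpha_obj_level (rng e)) -(alpha_obj_level (rng e')) -!Fm_rng E1.
move: E1; rewrite /Fm /mlev lv => /iter_Fhat_inj ->.
by rewrite (IH m').
Qed.

Lemma alpha_specP : alpha_spec level alpha.
Proof.
move=> n e be <-.
rewrite -{1}(cmp_idr e) alpha_cons ?rng_idm // alpha_idm -(Fm_src_blue be).
by rewrite cmp_idr iter_Fmap.
Qed.

Lemma alpha_bij : bijective alpha.
Proof.
have alpha_onto y : exists x, alpha x = y.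
  have [S [uS hS]] := level_morphisms (deg y) (level (rng y)).
  have [|||x _ <-] := @inj_in_onto _ S alpha uS _ _ y; last by exists x.
  - move=> x /hS[dx lx]; apply/hS.
    by rewrite alpha_deg alpha_rng alpha_obj_level.
  - by move=> a b _ _; apply: alpha_inj.
  - exact/hS.
pose alpha_inv y := epsilon (inhabits y) (fun x => alpha x = y).
have alpha_invK : cancel alpha_inv alpha.
  by move=> y; apply: (epsilon_spec _ (fun x => alpha x = y)).
by exists alpha_inv => // x; apply: alpha_inj.
Qed.

Lemma alpha_aut : is_automorphism alpha.
Proof.
split; [exists alpha_obj | split; [exact: alpha_deg | exact: alpha_bij]].
split; [exact: alpha_idm | split; [exact: alpha_rng | split]].
- exact: alpha_src.
- exact: alpha_cmp.
Qed.

Lemma alpha_unique beta : is_automorphism beta -> alpha_spec level beta -> beta = alpha.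
Proof.
move=> [[bo [bid [brng [bsrc bcmp]]]] [bdeg _]] bspec.
have beta_blue e : is_blue e -> beta e = Fm e.
  by move=> be; rewrite (bspec (level (rng e))) // iter_Fmap.
have bo_alpha v : bo v = alpha_obj v.
  by have [e [be <-]] := blue_in v; rewrite -brng beta_blue // Fm_rng.
apply: functional_extensionality => l.
elim/blue_first_ind: l => [l l1|e m be s IH].
  by apply: red_path_uniq; rewrite ?bdeg ?alpha_deg // brng alpha_rng bo_alpha.
by rewrite bcmp // alpha_cons // IH beta_blue.
Qed.

End Bratteli.

Section Homeomorphism.
Variables (T : Type) (X : T -> Prop) (B : (T -> Prop) -> Prop).

Definition pulls_back_basis (h : T -> T) :=
  forall b, B b -> exists2 b', B b' & forall x, X x -> b (h x) <-> b' x.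

Lemma Forall_pull_back h : pulls_back_basis h ->
  forall bs, Forall B bs -> exists2 bs', Forall B bs' &
    forall x, X x -> Forall (fun b => b (h x)) bs <-> Forall (fun b => b x) bs'.
Proof.
move=> hB; elim=> [|b bs IH].
  by exists nil => // x _; split => _; constructor.
case/Forall_cons_iff => Bb /IH[bs' Bbs' hbs'].
have [b' Bb' hb'] := hB b Bb.
exists (b' :: bs'); first by constructor.
by move=> x Xx; rewrite !Forall_cons_iff hb' // hbs'.
Qed.

Lemma homeo_onI (f g : T -> T) :
  (forall x, X x -> X (f x)) -> (forall y, X y -> X (g y)) ->
  (forall x, X x -> g (f x) = x) -> (forall y, X y -> f (g y) = y) ->
  pulls_back_basis f -> pulls_back_basis g -> homeo_on X B f.
Proof.
move=> Xf Xg gK fK Bf Bg; split; first exact: Xf.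
split; first by move=> x y Xx Xy e; rewrite -(gK x Xx) e gK.
split; first by move=> y Xy; exists (g y); split; [apply: Xg | apply: fK].
split.
  move=> V [VX Vo]; split => [x []//|x [Xx Vfx]].
  have [bs [FB [Fx Hy]]] := Vo _ Vfx.
  have [bs' FB' hbs'] := Forall_pull_back Bf FB.
  exists bs'; split => //; split; first exact/hbs'.
  move=> y Xy Fy; split => //; apply: Hy; first exact: Xf.
  exact/hbs'.
move=> U [UX Uo]; split => [_ [x [Ux <-]]|_ [x [Ux <-]]]; first exact/Xf/UX.
have [bs [FB [Fx Hy]]] := Uo _ Ux.
have [bs' FB' hbs'] := Forall_pull_back Bg FB.
have Xx := UX _ Ux.
exists bs'; split => //; split; first by apply/hbs'; rewrite ?gK //; apply: Xf.
move=> y Xy Fy; exists (g y); split; last exact: fK.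
by apply: Hy; [apply: Xg | apply/hbs'].
Qed.

End Homeomorphism.

Lemma om_eq (m1 m2 n1 n2 : N2) (h1 : leN2 m1 n1) (h2 : leN2 m2 n2) :
  m1 = m2 -> n1 = n2 -> om h1 = om h2.
Proof. by move=> e1 e2; subst; congr exist; apply: bool_irrelevance. Qed.

Section Automorphism.
Variable L : two_graph.
Implicit Types (a phi psi : Mor L -> Mor L) (l m : Mor L).

Lemma automorphismP a : is_automorphism a -> exists ao : Obj L -> Obj L,
  [/\ forall v, a (idm v) = idm (ao v), forall f, rng (a f) = ao (rng f),
      forall f, src (a f) = ao (src f),
      forall f g, src f = rng g -> a (cmp f g) = cmp (a f) (a g) &
      forall f, deg (a f) = deg f].
Proof. by move=> [[ao [? [? [? ?]]]] [? _]]; exists ao. Qed.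

Lemma automorphism_inv phi : is_automorphism phi ->
  exists2 psi, is_automorphism psi & cancel phi psi /\ cancel psi phi.
Proof.
move=> [[ao [aid [arng [asrc acmp]]]] [adeg [psi phiK psiK]]].
have ao_inj : injective ao.
  by move=> a b e; apply/idm_inj/(can_inj phiK); rewrite !aid e.
pose go v := rng (psi (idm v)).
have psi_idm v : psi (idm v) = idm (go v).
  by apply: deg0_idm; rewrite -adeg psiK deg_idm.
have ao_go v : ao (go v) = v by apply: idm_inj; rewrite -aid -psi_idm psiK.
have psi_rng f : rng (psi f) = go (rng f) by apply: ao_inj; rewrite ao_go -arng psiK.
have psi_src f : src (psi f) = go (src f) by apply: ao_inj; rewrite ao_go -asrc psiK.
exists psi => //; split; last by split; [move=> f; rewrite -adeg psiK | exists phi].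
exists go; split => //; split => //; split => // f g s.
by apply: (can_inj phiK); rewrite acmp ?psiK // psi_src psi_rng s.
Qed.

Lemma inf_path_comp a x : is_automorphism a -> is_inf_path x -> is_inf_path (a \o x).
Proof.
move=> /automorphismP[ao [aid arng asrc acmp adeg]] [xo [x_idm [x_ends x_cmp]]].
exists (ao \o xo); split; first by move=> m /=; rewrite x_idm aid.
split; first by move=> m n h /=; rewrite arng asrc adeg; case: (x_ends m n h) => -> [-> ->].
move=> m n p h1 h2 h3 /=; rewrite (x_cmp m n p h1 h2 h3) acmp //.
by have [_ [-> _]] := x_ends m n h1; have [-> _] := x_ends n p h2.
Qed.

Lemma cat_is_comp a l z x : is_automorphism a -> cat_is l z x ->
  cat_is (a l) (a \o z) (a \o x).
Proof.
move=> aa [x_inf [x0 <-]]; have [ao [_ _ _ _ adeg]] := automorphismP aa.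
split; first exact: inf_path_comp.
split.
  have -> : om (leN2_0 (deg (a l))) = om (leN2_0 (deg l)) by apply: om_eq; rewrite ?adeg.
  by rewrite /= x0.
apply: functional_extensionality => w; rewrite /shift /=.
by congr (a (x _)); apply: om_eq; rewrite ?adeg.
Qed.

Lemma cyl_comp a l x : is_automorphism a -> cyl l x -> cyl (a l) (a \o x).
Proof.
move=> aa [z [z_inf [z_rng lzx]]]; have [ao [_ arng asrc _ _]] := automorphismP aa.
exists (a \o z); split; first exact: inf_path_comp.
split; last exact: cat_is_comp.
by rewrite /path_rng /= arng -/(path_rng z) z_rng asrc.
Qed.

Definition gmap a (g : gelt L) := GElt (a \o gx g) (gk g) (a \o gy g).

Lemma bcyl_comp a l m g : is_automorphism a -> bcyl l m g -> bcyl (a l) (a m) (gmap a g).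
Proof.
move=> aa [z [z_inf [z_rng [lzx [mzy k]]]]]; have [ao [_ arng asrc _ adeg]] := automorphismP aa.
exists (a \o z); split; first exact: inf_path_comp.
split; first by rewrite /path_rng /= arng -/(path_rng z) z_rng asrc.
do 2 (split; first exact: cat_is_comp).
by rewrite /= k !adeg.
Qed.

Lemma in_G_comp a g : is_automorphism a -> in_G g -> in_G (gmap a g).
Proof.
move=> aa [x_inf [y_inf [l [m [k sh]]]]].
do 2 (split; first exact: inf_path_comp).
by exists l, m; split => //; exact: (congr1 (comp a) sh).
Qed.

Section Inverse.
Variables phi psi : Mor L -> Mor L.
Hypotheses (phi_aut : is_automorphism phi) (psi_aut : is_automorphism psi).
Hypotheses (phiK : cancel phi psi) (psiK : cancel psi phi).

Lemma comp_phiK (x : ipath L) : psi \o (phi \o x) = x.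
Proof. by apply: functional_extensionality => w /=; rewrite phiK. Qed.

Lemma gmap_phiK g : gmap psi (gmap phi g) = g.
Proof. by case: g => x k y; rewrite /gmap /= !comp_phiK. Qed.

Lemma cyl_compE l x : cyl l (phi \o x) <-> cyl (psi l) x.
Proof.
split; first by move=> /(cyl_comp psi_aut); rewrite comp_phiK.
by move=> /(cyl_comp phi_aut); rewrite psiK.
Qed.

Lemma bcyl_gmapE l m g : bcyl l m (gmap phi g) <-> bcyl (psi l) (psi m) g.
Proof.
split; first by move=> /(bcyl_comp psi_aut); rewrite gmap_phiK.
by move=> /(bcyl_comp phi_aut); rewrite !psiK.
Qed.

Lemma comp_pulls_back_basis : pulls_back_basis (@is_inf_path L) (@basisInf L) (comp phi).
Proof.
move=> b [l hl]; exists (cyl (psi l)); first by exists (psi l).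
by move=> x _; rewrite hl cyl_compE.
Qed.

Lemma gmap_pulls_back_basis : pulls_back_basis (@in_G L) (@basisG L) (gmap phi).
Proof.
move=> b [l [m [s hl]]]; exists (bcyl (psi l) (psi m)).
  have [go [_ _ gsrc _ _]] := automorphismP psi_aut.
  by exists (psi l), (psi m); rewrite !gsrc s.
by move=> g _; rewrite hl bcyl_gmapE.
Qed.

End Inverse.

Lemma aut_homeo_paths phi : is_automorphism phi ->
  homeo_on (@is_inf_path L) (@basisInf L) (fun x => phi \o x).
Proof.
move=> phi_aut; have [psi psi_aut [phiK psiK]] := automorphism_inv phi_aut.
apply: (@homeo_onI _ _ _ _ (comp psi)); try by move=> *; apply: inf_path_comp.
- by move=> x _; apply: comp_phiK.
- by move=> x _; apply: comp_phiK.
- exact: (comp_pulls_back_basis phi_aut psi_aut phiK psiK).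
- exact: (comp_pulls_back_basis psi_aut phi_aut psiK phiK).
Qed.

Lemma aut_groupoid_aut phi : is_automorphism phi -> top_groupoid_aut (gmap phi).
Proof.
move=> phi_aut; have [psi psi_aut [phiK psiK]] := automorphism_inv phi_aut.
split.
  apply: (@homeo_onI _ _ _ _ (gmap psi)); try by move=> *; apply: in_G_comp.
  - by move=> g _; apply: gmap_phiK.
  - by move=> g _; apply: gmap_phiK.
  - exact: (gmap_pulls_back_basis phi_aut psi_aut phiK psiK).
  - exact: (gmap_pulls_back_basis psi_aut phi_aut psiK phiK).
split => // g h _ _; rewrite /composable /=; split => [E|-> //].
by rewrite -(comp_phiK phiK (gy g)) E comp_phiK.
Qed.

End Automorphism.

Theorem lemma7p3 (L : two_graph) (level : Obj L -> nat) :
  rank2_bratteli level ->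
  exists alpha : Mor L -> Mor L,
    (is_automorphism alpha /\ alpha_spec level alpha) /\
    (forall beta : Mor L -> Mor L,
        is_automorphism beta -> alpha_spec level beta -> beta = alpha) /\
    homeo_on (@is_inf_path L) (@basisInf L) (fun x => alpha \o x) /\
    top_groupoid_aut
      (fun g : gelt L => GElt (alpha \o gx g) (gk g) (alpha \o gy g)).
Proof.
move=> HB; exists (alpha level).
split; first by split; [exact: alpha_aut | exact: alpha_specP].
split; first by move=> beta; apply: alpha_unique.
split; [exact: aut_homeo_paths (alpha_aut HB) | exact: aut_groupoid_aut (alpha_aut HB)].
Qed.
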